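(* Let $s$ and $l$ be two positive integers. Let $p$ be an odd prime such that $p\ge l+2$ and $p-1$ divides none of $sl$ and $ks+1$ for $k=1,\dots,l$. Then the homogeneous multiple harmonic sum satisfies $$H(\{s\}^l; p-1)\equiv S(\{s\}^l; p-1)\equiv 0 \pmod{p^{\mathrm{par}(ls-1)}}.$$ In particular, if $p\ge ls+3$ then the congruence $H(\{s\}^l; p-1)\equiv S(\{s\}^l; p-1)\equiv 0 \pmod{p^{\mathrm{par}(ls-1)}}$ always holds, and so $p\mid H(\{s\}^l; p-1)$.
   Context: For positive integers $s_1,\dots,s_l$ and $n\ge 0$, $H(s_1,\dots,s_l;n)=\sum_{1\le k_1<\dots<k_l\le n} k_1^{-s_1}\cdots k_l^{-s_l}$ and $S(s_1,\dots,s_l;n)=\sum_{1\le k_1\le \dots\le k_l\le n} k_1^{-s_1}\cdots k_l^{-s_l}$. The notation $\{s\}^l$ denotes the sequence $(s,\dots,s)$ with $s$ repeated $l$ times. $\mathrm{par}(m)$ denotes the parity of $m$: it equals $1$ if $m$ is odd and $2$ if $m$ is even. *)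

From mathcomp Require Import all_boot all_order all_algebra.
Set Implicit Arguments. Unset Strict Implicit. Unset Printing Implicit Defensive.
Import Order.TTheory GRing.Theory Num.Theory.
Local Open Scope ring_scope.

(* Multiple harmonic sum H(s_1,...,s_l; n) = sum_{1<=k_1<...<k_l<=n} prod k_i^{-s_i},
   indices k : 'I_l -> 'I_(n+1) (values 0..n), required to be >= 1. *)
Definition mhsH (ss : seq nat) (n : nat) : rat :=
  \sum_(k : {ffun 'I_(size ss) -> 'I_n.+1} |
         [forall i : 'I_(size ss), 0 < (k i : nat)]%N &&
         [forall i : 'I_(size ss), forall j : 'I_(size ss), (i < j)%N ==> (k i < k j)%N])
    \prod_(i < size ss) (((k i : nat)%:R : rat) ^- (nth 0%N ss i)).

Definition mhsS (ss : seq nat) (n : nat) : rat :=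
  \sum_(k : {ffun 'I_(size ss) -> 'I_n.+1} |
         [forall i : 'I_(size ss), 0 < (k i : nat)]%N &&
         [forall i : 'I_(size ss), forall j : 'I_(size ss), (i < j)%N ==> (k i <= k j)%N])
    \prod_(i < size ss) (((k i : nat)%:R : rat) ^- (nth 0%N ss i)).

Definition par (m : nat) : nat := if odd m then 1%N else 2%N.

Definition cong0_mod (x : rat) (p e : nat) : Prop :=
  exists (a : int) (b : nat),
    [/\ (0 < b)%N, coprime b p, ((p ^ e)%:Z %| a)%Z & x = a%:~R / b%:R].

From mathcomp Require Import all_boot all_order all_algebra.
From mathcomp Require Import cyclic zify ring.
Set Implicit Arguments. Unset Strict Implicit. Unset Printing Implicit Defensive.
Import Order.TTheory GRing.Theory Num.Theory.

(* Write 1/k = w_k / (p-1)! with w_k = (p-1)!/k, so that H({s}^l; p-1) and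
   S({s}^l; p-1) are N / ((p-1)!)^(ls), where N is the elementary, resp.
   complete, symmetric function of degree l in the w_k^s.  Modulo p, w_k = -1/k
   runs over the nonzero residues; multiplying all of them by a nonzero a only
   permutes them and multiplies N by a^(ls), so N = 0 mod p as soon as some a has
   a^(ls) <> 1, i.e. when p-1 does not divide ls.  Modulo p^2, the reflection
   k -> p-k gives w_(p-k) = -w_k + p c_k with c_k = w_k^2 mod p, so for odd ls
   we get 2N = p X mod p^2, where X is a first-order term which modulo p is a
   symmetric expression of degree ls+1 in the w_k; it vanishes by the same
   scaling argument when p-1 does not divide ls+1. *)

(** * Decreasing sequences *)

Definition gtn_if (strict : bool) : rel nat :=
  fun x y => if strict then (y < x)%N else (y <= x)%N.

Lemma gtn_if_trans b : transitive (gtn_if b).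
Proof. by move=> y x z; rewrite /gtn_if; case: b; lia. Qed.

Fixpoint dec_seqs (strict : bool) (m : nat) : nat -> seq (seq nat) :=
  if m is m'.+1 then
    fix dec_seqs_m n := if n is n'.+1 then
      dec_seqs_m n' ++ map (cons n) (dec_seqs strict m' (if strict then n' else n))
    else [::]
  else fun=> [:: [::]].

Lemma dec_seqsS b m n : dec_seqs b m.+1 n.+1 =
  dec_seqs b m.+1 n ++ map (cons n.+1) (dec_seqs b m (if b then n else n.+1)).
Proof. by []. Qed.

Lemma mem_dec_seqs b m n t : (t \in dec_seqs b m n) =
  [&& size t == m, sorted (gtn_if b) t & all (fun x => 0 < x <= n)%N t].
Proof.
have gtn_ifW x y : gtn_if b x y -> (y <= x)%N by case: b => //= /ltnW.
elim: m n t => [|m IHm] n; first by case.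
elim: n => [|n IHn] t; first by case: t => [|[|x] t] //=; rewrite !andbF.
rewrite dec_seqsS mem_cat IHn; case: t => [|x t] /=.
  by apply: negbTE; apply/negP => /mapP[].
rewrite (path_sortedE (@gtn_if_trans b)) -/(sorted _ t).
case: (ltngtP x n.+1) => [xn | xn | ->].
- rewrite (negbTE (introN mapP _)) ?orbF; last first.
    by move=> -[? _ [ex _]]; rewrite ex ltnn in xn.
  rewrite ltnS in xn; rewrite xn andbT.
  have [xt /= | _] := boolP (all (gtn_if b x) t); last by rewrite !andbF.
  suff -> : all (fun y => 0 < y <= n) t = all (fun y => 0 < y <= n.+1) t by [].
  apply: eq_in_all => y /(allP xt) /gtn_ifW; lia.
- rewrite (_ : x <= n = false) ?andbF /=; last lia.
  by apply: negbTE; apply/negP => /mapP[? _ [ex _]]; rewrite ex ltnn in xn.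
have cons_inj : injective (cons n.+1) by move=> ? ? [].
rewrite ltnn !andbF /= (mem_map cons_inj) IHm eqSS.
congr (_ && _); rewrite -andbA andbCA -all_predI; congr (_ && _).
by apply: eq_all => y; case: b {gtn_ifW IHm IHn}; rewrite /gtn_if /=; lia.
Qed.

Lemma uniq_dec_seqs b m n : uniq (dec_seqs b m n).
Proof.
elim: m n => [|m IHm] n //; elim: n => [|n IHn] //.
rewrite dec_seqsS cat_uniq IHn map_inj_uniq ?IHm ?andbT; last by move=> ? ? [].
apply/hasPn=> _ /mapP[t _ ->]; rewrite mem_dec_seqs /= ltnn.
by rewrite !andbF.
Qed.

Section IncreasingFunctions.

Variables (b : bool) (m n : nat).

Definition incr_pos (k : {ffun 'I_m -> 'I_n.+1}) : bool :=
  [forall i, 0 < k i]%N &&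
  [forall i : 'I_m, forall j : 'I_m, (i < j)%N ==> gtn_if b (k j) (k i)].

Definition ffun_dec_seq (k : {ffun 'I_m -> 'I_n.+1}) : seq nat :=
  rev [seq (k i : nat) | i <- enum 'I_m].

Lemma nth_ffun_graph (k : {ffun 'I_m -> 'I_n.+1}) (i : 'I_m) :
  nth 0%N [seq (k i : nat) | i <- enum 'I_m] i = k i.
Proof. by rewrite (nth_map i) ?size_enum_ord // nth_ord_enum. Qed.

Lemma ffun_dec_seq_inj : injective ffun_dec_seq.
Proof.
move=> k1 k2 /(congr1 rev); rewrite !revK => e; apply/ffunP => i; apply: val_inj.
by rewrite /= -!nth_ffun_graph e.
Qed.

Lemma ffun_dec_seqP k : incr_pos k -> ffun_dec_seq k \in dec_seqs b m n.
Proof.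
case/andP=> /forallP k_gt0 /forallP k_incr.
rewrite mem_dec_seqs size_rev size_map size_enum_ord eqxx rev_sorted all_rev /=.
apply/andP; split.
  have : sorted (relpre val ltn) (enum 'I_m).
    by rewrite -sorted_map val_enum_ord iota_ltn_sorted.
  rewrite sorted_map; apply: sub_sorted => i j /= ij.
  exact: implyP (forallP (k_incr i) j) ij.
by apply/allP=> _ /mapP[i _ ->]; rewrite k_gt0 -ltnS ltn_ord.
Qed.

Lemma dec_seqs_ffunP t : t \in dec_seqs b m n -> exists2 k, incr_pos k & t = ffun_dec_seq k.
Proof.
rewrite mem_dec_seqs => /and3P[/eqP size_t t_dec /allP t_range].
have nth_range i : (i < m)%N -> (0 < nth 0%N (rev t) i <= n)%N.
  by move=> im; apply: t_range; rewrite -mem_rev mem_nth // size_rev size_t.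
pose k : {ffun 'I_m -> 'I_n.+1} := [ffun i : 'I_m => inord (nth 0%N (rev t) i)].
have kE i : k i = nth 0%N (rev t) i :> nat.
  by rewrite ffunE inordK // ltnS; case/andP: (nth_range i (ltn_ord i)).
exists k.
  apply/andP; split; apply/forallP => i; rewrite ?kE.
    by case/andP: (nth_range i (ltn_ord i)).
  apply/forallP => j; apply/implyP => ij; rewrite !kE.
  apply: (sorted_ltn_nth (rev_trans (@gtn_if_trans b))) ij;
    by rewrite ?rev_sorted ?inE ?size_rev ?size_t.
apply: (canRL revK); apply: (@eq_from_nth _ 0%N).
  by rewrite size_rev size_map size_enum_ord.
by move=> i; rewrite size_rev size_t => im; rewrite (nth_ffun_graph k (Ordinal im)) kE.
Qed.

End IncreasingFunctions.

Local Open Scope ring_scope.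

Lemma sum_incr_pos_prod (R : comPzSemiRingType) b m n (F : nat -> R) :
  \sum_(k : {ffun 'I_m -> 'I_n.+1} | incr_pos b k) \prod_(i < m) F (k i) =
  \sum_(t <- dec_seqs b m n) \prod_(x <- t) F x.
Proof.
rewrite (eq_bigr (fun k => \prod_(x <- ffun_dec_seq k) F x)) => [|k _]; last first.
  by rewrite big_rev big_map enumT.
rewrite -big_enum -(big_map (@ffun_dec_seq m n) xpredT (fun t => \prod_(x <- t) F x)).
apply/perm_big/uniq_perm; rewrite ?uniq_dec_seqs //.
  by rewrite (map_inj_uniq (@ffun_dec_seq_inj _ _)) enum_uniq.
move=> t; apply/mapP/idP => [[k] | /dec_seqs_ffunP[k]].
  by rewrite mem_enum => /ffun_dec_seqP /[swap] ->.
by exists k; rewrite ?mem_enum.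
Qed.

(** * Symmetric sums as polynomial coefficients *)

Section GeneratingPolynomials.

Variable R : comNzRingType.

Lemma sum_dec_seqs_strict (f : nat -> R) m n :
  \sum_(t <- dec_seqs true m n) \prod_(x <- t) f x =
  (\prod_(1 <= k < n.+1) (1 + (f k)%:P * 'X))`_m.
Proof.
elim: n m => [|n IHn] m.
  by rewrite big_geq // coef1; case: m => [|m]; rewrite ?big_cons ?big_nil ?addr0.
rewrite big_nat_recr //= mulrDr mulr1 coefD mulrCA coefCM coefMX.
case: m => [|m]; first by rewrite mulr0 addr0 -IHn.
rewrite dec_seqsS big_cat big_map -!IHn big_distrr; congr (_ + _).
by apply: eq_bigr => t _; rewrite big_cons.
Qed.

Lemma sum_dec_seqs_weak (f : nat -> R) K m n : (m <= K)%N ->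
  \sum_(t <- dec_seqs false m n) \prod_(x <- t) f x =
  (\prod_(1 <= k < n.+1) \poly_(j < K.+1) f k ^+ j)`_m.
Proof.
elim: n m => [|n IHn] m mK.
  by rewrite big_geq // coef1; case: m mK => [|m] _; rewrite ?big_cons ?big_nil ?addr0.
rewrite big_nat_recr //=; set P := \prod_(1 <= k < n.+1) _; set c := f n.+1.
have coefPQ i : (i <= K)%N ->
    (P * \poly_(j < K.+1) c ^+ j)`_i = \sum_(j < i.+1) P`_j * c ^+ (i - j).
  move=> iK; rewrite coefM; apply: eq_bigr => j _.
  by rewrite coef_poly ltnS (leq_trans (leq_subr _ _) iK).
rewrite coefPQ //.
elim: m mK => [|m IHm] mK.
  by rewrite big_ord1 -IHn // sub0n expr0 mulr1 /=.
rewrite (dec_seqsS false m n) big_cat big_map IHn //.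
have -> : \sum_(t <- dec_seqs false m n.+1) \prod_(x <- n.+1 :: t) f x =
    c * \sum_(t <- dec_seqs false m n.+1) \prod_(x <- t) f x.
  by rewrite big_distrr; apply: eq_bigr => t _; rewrite big_cons.
rewrite IHm ?(ltnW mK) // [in RHS]big_ord_recr subnn expr0 mulr1 [RHS]addrC.
congr (_ + _); rewrite big_distrr; apply: eq_bigr => j _.
by rewrite /= subSn -1?ltnS // exprS mulrCA.
Qed.

Lemma perm_sum_dec_seqs b (f g : nat -> R) m n :
  perm_eq [seq g k | k <- iota 1 n] [seq f k | k <- iota 1 n] ->
  \sum_(t <- dec_seqs b m n) \prod_(x <- t) g x =
  \sum_(t <- dec_seqs b m n) \prod_(x <- t) f x.
Proof.
have [Q sumQ] : exists Q : R -> {poly R}, forall h : nat -> R,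
    \sum_(t <- dec_seqs b m n) \prod_(x <- t) h x = (\prod_(v <- map h (iota 1 n)) Q v)`_m.
  exists (if b then fun v => 1 + v%:P * 'X else fun v => \poly_(j < m.+1) v ^+ j).
  have -> : iota 1 n = index_iota 1 n.+1 by rewrite /index_iota subn1.
  move=> h; rewrite big_map; case: b.
    exact: sum_dec_seqs_strict.
  exact: sum_dec_seqs_weak.
by move=> perm_gf; rewrite !sumQ (perm_big _ perm_gf).
Qed.

End GeneratingPolynomials.

Lemma fixed_mull_eq0 (R : idomainType) (c x : R) : c != 1 -> c * x = x -> x = 0.
Proof.
move=> c1 /eqP; rewrite -subr_eq0 -{2}(mul1r x) -mulrBl mulf_eq0 subr_eq0.
by rewrite (negbTE c1) => /eqP.
Qed.

Lemma prodr_scale_seq (R : comPzSemiRingType) (c : R) (a : nat -> R) t :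
  \prod_(x <- t) (c * a x) = c ^+ size t * \prod_(x <- t) a x.
Proof.
elim: t => [|x t IHt]; first by rewrite !big_nil mulr1.
by rewrite !big_cons IHt exprS mulrACA.
Qed.

Lemma exprD_nilp (R : comNzRingType) (a e : R) n : e * e = 0 ->
  (a + e) ^+ n.+1 = a ^+ n.+1 + n.+1%:R * e * a ^+ n.
Proof.
move=> ee; elim: n => [|n IHn]; first by rewrite !expr1 expr0 mulr1 mul1r.
rewrite exprS IHn; transitivity
  (a ^+ n.+2 + n.+2%:R * e * a ^+ n.+1 + (e * e) * (n.+1%:R * a ^+ n)).
  by rewrite !exprS -[n.+2]addn1 natrD; ring.
by rewrite ee mul0r addr0.
Qed.

(* [dprod a b t] = \sum_i b t_i * \prod_(j != i) a t_j *)
Fixpoint dprod (R : comPzSemiRingType) (a b : nat -> R) (t : seq nat) : R :=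
  if t is x :: t' then b x * \prod_(y <- t') a y + a x * dprod a b t' else 0.

Section FirstOrderProducts.

Variable R : comNzRingType.
Implicit Types (a b : nat -> R) (t : seq nat).

Lemma prod_add_nilp (e : R) a b t : e * e = 0 ->
  \prod_(x <- t) (a x + e * b x) = \prod_(x <- t) a x + e * dprod a b t.
Proof.
move=> ee; elim: t => [|x t IHt]; first by rewrite !big_nil mulr0 addr0.
rewrite !big_cons IHt /=.
set P := \prod_(y <- t) a y; set D := dprod a b t.
have -> : (a x + e * b x) * (P + e * D) =
   a x * P + e * (b x * P + a x * D) + (e * e) * (b x * D) by ring.
by rewrite ee mul0r addr0.
Qed.

Lemma coef_prod_lin a b t :
  (\prod_(x <- t) ((a x)%:P + (b x)%:P * 'X))`_1 = dprod a b t.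
Proof.
suff : (\prod_(x <- t) ((a x)%:P + (b x)%:P * 'X))`_0 = \prod_(x <- t) a x /\
       (\prod_(x <- t) ((a x)%:P + (b x)%:P * 'X))`_1 = dprod a b t by case.
elim: t => [|x t [IH0 IH1]]; first by rewrite !big_nil !coef1.
rewrite !big_cons mulrDl -mulrA ['X * _]mulrC !coefD !coefCM !coefMX IH0 IH1.
by rewrite mulr0 addr0 /= addrC.
Qed.

Lemma dprod_scale (c d : R) a b t :
  dprod (fun x => c * a x) (fun x => d * b x) t = c ^+ (size t).-1 * d * dprod a b t.
Proof.
elim: t => [|x t IHt] /=; first by rewrite mulr0.
rewrite prodr_scale_seq IHt; case: t {IHt} => [|y t] /=.
  by rewrite !mulr0 !addr0 big_nil; ring.
by rewrite exprS; ring.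
Qed.

Lemma eq_in_dprod a a' b b' t :
  {in t, a =1 a'} -> {in t, b =1 b'} -> dprod a b t = dprod a' b' t.
Proof.
elim: t => [|x t IHt] //= ea eb.
have ea' : {in t, a =1 a'} by move=> y yt; apply: ea; rewrite inE yt orbT.
have eb' : {in t, b =1 b'} by move=> y yt; apply: eb; rewrite inE yt orbT.
by rewrite IHt // ea ?eb ?mem_head // (eq_big_seq _ ea').
Qed.

Lemma rmorph_dprod (S : comNzRingType) (phi : {rmorphism R -> S}) a b t :
  phi (dprod a b t) = dprod (fun x => phi (a x)) (fun x => phi (b x)) t.
Proof.
elim: t => [|x t IHt] /=; first by rewrite rmorph0.
by rewrite rmorphD !rmorphM rmorph_prod IHt.
Qed.

End FirstOrderProducts.

(** * The residues (p-1)!/k modulo p *)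

Lemma mem_iota_pred p : (0 < p)%N -> forall k, (k \in iota 1 p.-1) = (0 < k < p)%N.
Proof. by move=> p_gt0 k; rewrite mem_iota add1n (ltn_predK p_gt0). Qed.

Lemma perm_iota_reflect p : (0 < p)%N ->
  perm_eq [seq p - x | x <- iota 1 p.-1]%N (iota 1 p.-1).
Proof.
move=> p_gt0.
apply: uniq_perm; rewrite ?iota_uniq //.
  rewrite map_inj_in_uniq ?iota_uniq // => x y; rewrite !(mem_iota_pred p_gt0) => xp yp.
  by move/eqP; rewrite -(eqn_add2r (x + y)); lia.
move=> y; rewrite (mem_iota_pred p_gt0); apply/mapP/idP => [[x] | yp].
  by rewrite (mem_iota_pred p_gt0) => xp ->; lia.
by exists (p - y)%N; rewrite ?(mem_iota_pred p_gt0); lia.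
Qed.

Definition fact_div (p k : nat) : nat := ((p.-1)`! %/ k)%N.

Lemma mul_fact_div p k : (0 < k < p)%N -> (k * fact_div p k)%N = (p.-1)`!.
Proof.
case/andP=> k_gt0 kp; rewrite mulnC divnK // dvdn_fact // k_gt0 /=.
by rewrite -ltnS (ltn_predK kp).
Qed.

Lemma fact_div_gt0 p k : (0 < k < p)%N -> (0 < fact_div p k)%N.
Proof.
by move=> kp; rewrite -(@ltn_pmul2l k) ?muln0 ?mul_fact_div ?fact_gt0 //; case/andP: kp.
Qed.

Section PrimeField.

Variable p : nat.
Hypothesis p_prime : prime p.
Local Notation F := 'F_p.
Let p_gt0 : (0 < p)%N := prime_gt0 p_prime.

Lemma natr_Fp_eq0 n : ((n%:R : F) == 0) = (p %| n)%N.
Proof. by rewrite (dvdn_pcharf (pchar_Fp p_prime)). Qed.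

Lemma intr_Fp_eq0 (z : int) : ((z%:~R : F) == 0) = (p %| z)%Z.
Proof.
rewrite dvdzE; case: z => n.
  by rewrite -[n%:~R]/(n%:R) natr_Fp_eq0.
by rewrite NegzE mulrNz oppr_eq0 abszN -[n.+1%:~R]/(n.+1%:R) natr_Fp_eq0.
Qed.

Lemma natr_Fp_neq0 k : (0 < k < p)%N -> (k%:R : F) != 0.
Proof.
case/andP=> k_gt0 kp; rewrite natr_Fp_eq0; apply/negP => /(dvdn_leq k_gt0).
by rewrite leqNgt kp.
Qed.

Lemma fact_Fp : ((p.-1)`!%:R : F) = -1.
Proof.
apply/eqP; rewrite -subr_eq0 opprK natr1 natr_Fp_eq0 -Wilson //.
exact: prime_gt1.
Qed.

Lemma fact_div_Fp k : (0 < k < p)%N -> ((fact_div p k)%:R : F) = - (k%:R)^-1.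
Proof.
move=> kp; apply: (mulfI (natr_Fp_neq0 kp)).
by rewrite -natrM mul_fact_div // fact_Fp mulrN divff ?natr_Fp_neq0.
Qed.

Lemma mem_dec_seqs_range b l t x : t \in dec_seqs b l p.-1 -> x \in t -> (0 < x < p)%N.
Proof.
rewrite mem_dec_seqs => /and3P[_ _ /allP t_range] /t_range.
by have := prime_gt1 p_prime; lia.
Qed.

Lemma mul_fact_div_reflect x : (0 < x < p)%N ->
  (x * (fact_div p (p - x) + fact_div p x) = p * fact_div p (p - x))%N.
Proof.
move=> xp; have pxp : (0 < p - x < p)%N by lia.
by rewrite mulnDr (mul_fact_div xp) -(mul_fact_div pxp) -mulnDl subnKC //; lia.
Qed.

Lemma dvdn_fact_div_reflect x : (0 < x < p)%N -> (x %| fact_div p (p - x))%N.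
Proof.
move=> xp; have : (x %| p * fact_div p (p - x))%N.
  by rewrite -mul_fact_div_reflect // dvdn_mulr.
rewrite Gauss_dvdr // coprime_sym prime_coprime //.
by apply/negP => /dvdn_leq; lia.
Qed.

Definition refl_quo (x : nat) : nat := (fact_div p (p - x) %/ x)%N.

Lemma fact_div_reflect x : (0 < x < p)%N ->
  (fact_div p (p - x) + fact_div p x = p * refl_quo x)%N.
Proof.
move=> xp; have x_gt0 : (0 < x)%N by case/andP: xp.
apply/eqP; rewrite -(eqn_pmul2l x_gt0) mul_fact_div_reflect // /refl_quo.
by rewrite mulnCA [(x * _)%N]mulnC divnK ?dvdn_fact_div_reflect.
Qed.

Lemma refl_quo_Fp x : (0 < x < p)%N ->
  ((refl_quo x)%:R : 'F_p) = (fact_div p x)%:R ^+ 2.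
Proof.
move=> xp; have pxp : (0 < p - x < p)%N by lia.
have x_neq0 := natr_Fp_neq0 xp.
apply: (mulIf x_neq0); rewrite -natrM divnK ?dvdn_fact_div_reflect //.
rewrite !fact_div_Fp // natrB ?pchar_Fp_0 //; last by case/andP: xp => _ /ltnW.
by rewrite sub0r invrN opprK sqrrN expr2 -mulrA mulVf ?mulr1.
Qed.

Definition fact_div_residues : seq F := [seq (fact_div p k)%:R | k <- iota 1 p.-1].

Lemma uniq_fact_div_residues : uniq fact_div_residues.
Proof.
rewrite map_inj_in_uniq ?iota_uniq // => j k; rewrite !(mem_iota_pred p_gt0) => jp kp.
rewrite !fact_div_Fp // => /oppr_inj /invr_inj e.
have := val_Fp_nat p_prime j; rewrite e val_Fp_nat // !modn_small //.
  by case/andP: jp.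
by case/andP: kp.
Qed.

Lemma mem_fact_div_residues u : (u \in fact_div_residues) = (u != 0).
Proof.
apply/mapP/idP => [[k] | u_neq0].
  rewrite (mem_iota_pred p_gt0) => kp ->.
  by rewrite fact_div_Fp // oppr_eq0 invr_eq0 natr_Fp_neq0.
set v := - u^-1; have v_neq0 : v != 0 by rewrite oppr_eq0 invr_eq0.
have vp : (0 < (v : nat) < p)%N.
  apply/andP; split; last by apply: leq_trans (ltn_ord v) _; rewrite Fp_cast.
  by rewrite lt0n; apply: contra v_neq0 => /eqP v0; apply/eqP/val_inj.
exists (v : nat); first by rewrite (mem_iota_pred p_gt0).
by rewrite fact_div_Fp // natr_Zp /v invrN opprK invrK.
Qed.

Lemma perm_scale_fact_div_residues (a : F) : a != 0 ->
  perm_eq [seq a * u | u <- fact_div_residues] fact_div_residues.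
Proof.
move=> a_neq0; apply: uniq_perm.
- by rewrite (map_inj_uniq (mulfI a_neq0)) uniq_fact_div_residues.
- exact: uniq_fact_div_residues.
move=> u; rewrite mem_fact_div_residues; apply/mapP/idP => [[v] | u_neq0].
  by rewrite mem_fact_div_residues => v_neq0 ->; rewrite mulf_neq0.
exists (a^-1 * u); first by rewrite mem_fact_div_residues mulf_neq0 ?invr_eq0.
by rewrite mulrA divff // mul1r.
Qed.

Lemma exists_pow_Fp_neq1 m : ~~ (p.-1 %| m)%N -> exists2 a : F, a != 0 & a ^+ m != 1.
Proof.
move=> ndvd; have p1_gt0 : (0 < p.-1)%N by have := prime_gt1 p_prime; lia.
have : has (p.-1).-primitive_root fact_div_residues.
  apply: has_prim_root; rewrite ?uniq_fact_div_residues ?size_map ?size_iota //.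
  apply/allP=> u; rewrite mem_fact_div_residues unity_rootE => u_neq0.
  apply/eqP/(mulIf u_neq0); rewrite mul1r -exprSr (ltn_predK (prime_gt1 p_prime)).
  by rewrite -[in LHS](natr_Zp u) -natrX -Fp_nat_mod // fermat_little // Fp_nat_mod ?natr_Zp.
case/hasP=> a; rewrite mem_fact_div_residues => a_neq0 a_prim.
by exists a; rewrite -?(prim_order_dvd a_prim).
Qed.

Lemma sum_dec_seqs_fact_div_scale (R : comNzRingType) (Phi : F -> R) b l (a : F) :
  a != 0 ->
  \sum_(t <- dec_seqs b l p.-1) \prod_(x <- t) Phi (a * (fact_div p x)%:R) =
  \sum_(t <- dec_seqs b l p.-1) \prod_(x <- t) Phi (fact_div p x)%:R.
Proof.
move=> a_neq0; apply: perm_sum_dec_seqs.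
have -> : [seq Phi (a * (fact_div p k)%:R) | k <- iota 1 p.-1] =
    map Phi [seq a * u | u <- fact_div_residues] by rewrite -!map_comp.
rewrite (map_comp Phi (fun k => (fact_div p k)%:R)).
exact/perm_map/perm_scale_fact_div_residues.
Qed.

Lemma sum_dec_seqs_fact_div_pow_eq0 b l s : ~~ (p.-1 %| l * s)%N ->
  \sum_(t <- dec_seqs b l p.-1) \prod_(x <- t) ((fact_div p x)%:R : F) ^+ s = 0.
Proof.
case/exists_pow_Fp_neq1 => a a_neq0 a_ls; apply: (fixed_mull_eq0 a_ls).
rewrite -[RHS](sum_dec_seqs_fact_div_scale (fun u => u ^+ s) _ _ a_neq0) big_distrr.
rewrite big_seq [RHS]big_seq; apply: eq_bigr => t; rewrite mem_dec_seqs.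
case/and3P=> /eqP <- _ _; under [RHS]eq_bigr do rewrite exprMn.
by rewrite prodr_scale_seq -exprM mulnC.
Qed.

Lemma sum_dec_seqs_fact_div_dprod_eq0 b l s : (0 < l)%N -> ~~ (p.-1 %| l * s + 1)%N ->
  \sum_(t <- dec_seqs b l p.-1)
     dprod (fun x => ((fact_div p x)%:R : F) ^+ s) (fun x => (fact_div p x)%:R ^+ s.+1) t = 0.
Proof.
move=> l_gt0; case/exists_pow_Fp_neq1 => a a_neq0 a_ls1; apply: (fixed_mull_eq0 a_ls1).
have := congr1 (fun P : {poly F} => P`_1) (sum_dec_seqs_fact_div_scale
  (fun u : F => (u ^+ s)%:P + (u ^+ s.+1)%:P * 'X) b l a_neq0).
pose z x : F := (fact_div p x)%:R.
rewrite /= !coef_sum.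
rewrite (eq_bigr (fun t => dprod (fun x => (a * z x) ^+ s) (fun x => (a * z x) ^+ s.+1) t));
  last by move=> t _; exact: coef_prod_lin.
rewrite [in RHS](eq_bigr (fun t => dprod (fun x => z x ^+ s) (fun x => z x ^+ s.+1) t));
  last by move=> t _; exact: coef_prod_lin.
move=> scale_inv; rewrite -[RHS]scale_inv big_distrr big_seq [RHS]big_seq; apply: eq_bigr => t.
rewrite mem_dec_seqs => /and3P[/eqP size_t _ _].
rewrite [RHS](@eq_in_dprod _ _ (fun x => a ^+ s * z x ^+ s) _
    (fun x => a ^+ s.+1 * z x ^+ s.+1)) => [|x _|x _]; rewrite ?exprMn //.
rewrite dprod_scale size_t -exprM -exprD; congr (_ ^+ _ * _).
by rewrite -{1}(prednK l_gt0) mulSn mulnC; lia.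
Qed.

End PrimeField.

(** * The numerator of H and S modulo p and p^2 *)

Definition mhs_numer (b : bool) (p s l : nat) : nat :=
  (\sum_(t <- dec_seqs b l p.-1) \prod_(x <- t) fact_div p x ^ s)%N.

Lemma prime_dvd_mhs_numer b p s l : prime p -> ~~ (p.-1 %| l * s)%N ->
  (p %| mhs_numer b p s l)%N.
Proof.
move=> p_prime ndvd; rewrite -(natr_Fp_eq0 p_prime) natr_sum; apply/eqP.
rewrite -[RHS](sum_dec_seqs_fact_div_pow_eq0 p_prime b ndvd); apply: eq_bigr => t _.
by rewrite natr_prod; apply: eq_bigr => x _; rewrite natrX.
Qed.

Lemma natr_Zp_eq0 m n : (1 < m)%N -> ((n%:R : 'Z_m) == 0) = (m %| n)%N.
Proof. by move=> m_gt1; rewrite -val_eqE /= val_Zp_nat. Qed.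

Section Reflection.

Variables (p s : nat).
Hypotheses (p_prime : prime p) (s_gt0 : (0 < s)%N).

Definition refl0 (R : pzRingType) (x : nat) : R := (- (fact_div p x)%:R) ^+ s.
Definition refl1 (R : pzRingType) (x : nat) : R :=
  (s * refl_quo p x)%:R * (- (fact_div p x)%:R) ^+ s.-1.

Lemma rmorph_refl0 (R S : pzRingType) (phi : {rmorphism R -> S}) x :
  phi (refl0 R x) = refl0 S x.
Proof. by rewrite rmorphXn rmorphN rmorph_nat. Qed.

Lemma rmorph_refl1 (R S : pzRingType) (phi : {rmorphism R -> S}) x :
  phi (refl1 R x) = refl1 S x.
Proof. by rewrite rmorphM rmorphXn rmorphN !rmorph_nat. Qed.

Lemma refl_pow_Zp2 x : (0 < x < p)%N ->
  ((fact_div p (p - x) ^ s)%:R : 'Z_(p ^ 2)) = refl0 _ x + p%:R * refl1 _ x.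
Proof.
move=> xp; have p2_gt1 : (1 < p ^ 2)%N by rewrite -(expn0 p) ltn_exp2l ?prime_gt1.
have pp_eq0 : (p%:R * p%:R : 'Z_(p ^ 2)) = 0 by rewrite -natrM mulnn pchar_Zp.
rewrite natrX; have -> : ((fact_div p (p - x))%:R : 'Z_(p ^ 2)) =
    - (fact_div p x)%:R + p%:R * (refl_quo p x)%:R.
  apply: (addIr (fact_div p x)%:R).
  by rewrite -natrD fact_div_reflect // natrM addrAC addNr add0r.
rewrite -(prednK s_gt0) exprD_nilp; last by rewrite mulrACA pp_eq0 mul0r.
by rewrite /refl0 /refl1 natrM (prednK s_gt0); ring.
Qed.

Lemma sum_dec_seqs_dprod_refl_Fp_eq0 b l : (0 < l)%N -> ~~ (p.-1 %| l * s + 1)%N ->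
  \sum_(t <- dec_seqs b l p.-1) dprod (refl0 'F_p) (refl1 'F_p) t = 0.
Proof.
move=> l_gt0 ndvd; pose c : 'F_p := (-1) ^+ s; pose d : 'F_p := s%:R * (-1) ^+ s.-1.
have := sum_dec_seqs_fact_div_dprod_eq0 p_prime b l_gt0 ndvd.
move/(congr1 (fun v => c ^+ l.-1 * d * v)).
rewrite mulr0 => vanish; rewrite -[RHS]vanish big_distrr.
rewrite big_seq [RHS]big_seq; apply: eq_bigr => t t_dec.
move: (t_dec); rewrite mem_dec_seqs => /and3P[/eqP <- _ _].
rewrite -[RHS]/(c ^+ (size t).-1 * d * dprod _ _ t) -dprod_scale.
apply: eq_in_dprod => x /(mem_dec_seqs_range p_prime t_dec) xp.
  by rewrite /refl0 exprNn.
set w : 'F_p := (fact_div p x)%:R; have -> : w ^+ s.+1 = w ^+ 2 * w ^+ s.-1.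
  by rewrite -exprD; congr (_ ^+ _); lia.
by rewrite /refl1 natrM refl_quo_Fp // exprNn /d; ring.
Qed.

Lemma dvdz_sum_dprod_refl b l : (0 < l)%N -> ~~ (p.-1 %| l * s + 1)%N ->
  (p %| \sum_(t <- dec_seqs b l p.-1) dprod (refl0 int) (refl1 int) t)%Z.
Proof.
move=> l_gt0 ndvd; rewrite -(intr_Fp_eq0 p_prime) rmorph_sum; apply/eqP.
rewrite -[RHS](sum_dec_seqs_dprod_refl_Fp_eq0 b l_gt0 ndvd); apply: eq_bigr => t _.
by rewrite rmorph_dprod; apply: eq_in_dprod => x _; rewrite ?rmorph_refl0 ?rmorph_refl1.
Qed.

Lemma sum_prod_refl0 (R : comNzRingType) b l :
  \sum_(t <- dec_seqs b l p.-1) \prod_(x <- t) refl0 R x =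
  (-1) ^+ (l * s) * (mhs_numer b p s l)%:R.
Proof.
rewrite natr_sum big_distrr big_seq [RHS]big_seq; apply: eq_bigr => t.
rewrite mem_dec_seqs => /and3P[/eqP size_t _ _].
under eq_bigr do rewrite /refl0 exprNn.
rewrite prodr_scale_seq natr_prod size_t -exprM mulnC; congr (_ * _).
by apply: eq_bigr => x _; rewrite natrX.
Qed.

Lemma natr_mhs_numer_Zp2 b l : ((mhs_numer b p s l)%:R : 'Z_(p ^ 2)) =
  \sum_(t <- dec_seqs b l p.-1) \prod_(x <- t) (refl0 _ x + p%:R * refl1 _ x).
Proof.
rewrite natr_sum; under eq_bigr do rewrite natr_prod; apply: perm_sum_dec_seqs.
have -> : [seq refl0 _ x + p%:R * refl1 _ x | x <- iota 1 p.-1] =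
    [seq (fact_div p (p - x) ^ s)%:R : 'Z_(p ^ 2) | x <- iota 1 p.-1].
  by apply/eq_in_map => x; rewrite (mem_iota_pred (prime_gt0 p_prime)) // => /refl_pow_Zp2 ->.
rewrite (map_comp (fun x => ((fact_div p x ^ s)%:R : 'Z_(p ^ 2))) (subn p)).
by rewrite perm_sym; apply/perm_map/perm_iota_reflect/prime_gt0.
Qed.

Lemma prime_sq_dvd_mhs_numer b l : odd p -> (0 < l)%N -> odd (l * s) ->
  ~~ (p.-1 %| l * s + 1)%N -> (p ^ 2 %| mhs_numer b p s l)%N.
Proof.
move=> p_odd l_gt0 ls_odd ndvd; set N := mhs_numer b p s l.
have p2_gt1 : (1 < p ^ 2)%N by rewrite -(expn0 p) ltn_exp2l ?prime_gt1.
pose P : 'Z_(p ^ 2) := p%:R.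
have PP : P * P = 0 by rewrite -natrM mulnn pchar_Zp.
have [q Xq] := dvdzP (dvdz_sum_dprod_refl b l_gt0 ndvd).
(* Reflecting x to p - x and expanding to first order in p gives N = - N + p X
   modulo p^2, where p divides X. *)
have : (N%:R : 'Z_(p ^ 2)) = - N%:R.
  rewrite [LHS]natr_mhs_numer_Zp2.
  under eq_bigr do rewrite prod_add_nilp //.
  rewrite big_split /= sum_prod_refl0 -signr_odd ls_odd expr1 mulN1r -big_distrr /=.
  have -> : \sum_(t <- dec_seqs b l p.-1) dprod (refl0 'Z_(p ^ 2)) (refl1 _) t =
      (\sum_(t <- dec_seqs b l p.-1) dprod (refl0 int) (refl1 int) t)%:~R.
    rewrite rmorph_sum; apply: eq_bigr => t _; rewrite rmorph_dprod.
    by apply: eq_in_dprod => x _; rewrite ?rmorph_refl0 ?rmorph_refl1.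
  by rewrite Xq rmorphM mulrCA PP mulr0 addr0.
move/eqP; rewrite -subr_eq0 opprK -mulr2n -mulrnA natr_Zp_eq0 // mulnC Gauss_dvdr //.
by rewrite coprime_sym coprime2n oddX p_odd orbT.
Qed.

End Reflection.

Lemma nth_nseq_ord l s (i : 'I_(size (nseq l s))) : nth 0%N (nseq l s) i = s.
Proof. by rewrite nth_nseq -[X in (_ < X)%N](size_nseq l s) ltn_ord. Qed.

Lemma mhsH_dec_seqs l s n :
  mhsH (nseq l s) n = \sum_(t <- dec_seqs true l n) \prod_(x <- t) (x%:R : rat) ^- s.
Proof.
rewrite /mhsH; under eq_bigr do under eq_bigr do rewrite nth_nseq_ord.
by rewrite -[in RHS](size_nseq l s); apply: (sum_incr_pos_prod true).
Qed.

Lemma mhsS_dec_seqs l s n :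
  mhsS (nseq l s) n = \sum_(t <- dec_seqs false l n) \prod_(x <- t) (x%:R : rat) ^- s.
Proof.
rewrite /mhsS; under eq_bigr do under eq_bigr do rewrite nth_nseq_ord.
by rewrite -[in RHS](size_nseq l s); apply: (sum_incr_pos_prod false).
Qed.

Lemma sum_dec_seqs_inv_pow b p s l : prime p ->
  \sum_(t <- dec_seqs b l p.-1) \prod_(x <- t) (x%:R : rat) ^- s =
  (mhs_numer b p s l)%:R / ((p.-1)`! ^ (s * l))%:R.
Proof.
move=> p_prime; rewrite natr_sum mulr_suml; apply: eq_big_seq => t t_dec.
move: (t_dec); rewrite mem_dec_seqs => /and3P[/eqP size_t _ _].
rewrite -size_t expnM natrX -exprVn natr_prod mulrC -prodr_scale_seq.
apply: eq_big_seq => x /(mem_dec_seqs_range p_prime t_dec) xp.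
have fd_neq0 : ((fact_div p x ^ s)%:R : rat) != 0.
  by rewrite pnatr_eq0 -lt0n expn_gt0 fact_div_gt0.
by rewrite -(mul_fact_div xp) expnMn natrM invfM -mulrA mulVf // mulr1 natrX.
Qed.

Lemma cong0_mod_sum_dec_seqs b p s l e : prime p -> (p ^ e %| mhs_numer b p s l)%N ->
  cong0_mod (\sum_(t <- dec_seqs b l p.-1) \prod_(x <- t) (x%:R : rat) ^- s) p e.
Proof.
move=> p_prime dvd_numer; rewrite sum_dec_seqs_inv_pow //.
exists (mhs_numer b p s l)%:Z, ((p.-1)`! ^ (s * l))%N; split => //.
- by rewrite expn_gt0 fact_gt0.
- rewrite coprimeXl // coprime_sym prime_coprime // -(natr_Fp_eq0 p_prime).
  by rewrite fact_Fp // oppr_eq0 oner_eq0.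
Qed.

Lemma prime_par_dvd_mhs_numer b p s l : prime p -> odd p -> (0 < s)%N -> (0 < l)%N ->
  ~~ (p.-1 %| l * s)%N -> ~~ (p.-1 %| l * s + 1)%N ->
  (p ^ par (l * s - 1) %| mhs_numer b p s l)%N.
Proof.
move=> p_prime p_odd s_gt0 l_gt0 ndvd ndvd1.
rewrite /par oddB ?muln_gt0 ?l_gt0 // addbT; case: ifPn => [ls_even | /negPn ls_odd].
  by rewrite expn1 prime_dvd_mhs_numer.
exact: prime_sq_dvd_mhs_numer.
Qed.

Theorem theorem2p14 (s l p : nat) :
  (0 < s)%N -> (0 < l)%N -> prime p -> odd p ->
  ((l + 2 <= p)%N ->
   ~~ (p.-1 %| s * l)%N ->
   (forall k : nat, (1 <= k <= l)%N -> ~~ (p.-1 %| k * s + 1)%N) ->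
   cong0_mod (mhsH (nseq l s) p.-1) p (par (l * s - 1)) /\
   cong0_mod (mhsS (nseq l s) p.-1) p (par (l * s - 1)))
  /\
  ((l * s + 3 <= p)%N ->
   [/\ cong0_mod (mhsH (nseq l s) p.-1) p (par (l * s - 1)),
       cong0_mod (mhsS (nseq l s) p.-1) p (par (l * s - 1)) &
       cong0_mod (mhsH (nseq l s) p.-1) p 1]).
Proof.
move=> s_gt0 l_gt0 p_prime p_odd; rewrite mhsH_dec_seqs mhsS_dec_seqs.
have mhs_cong b : ~~ (p.-1 %| l * s)%N -> ~~ (p.-1 %| l * s + 1)%N ->
    cong0_mod (\sum_(t <- dec_seqs b l p.-1) \prod_(x <- t) (x%:R : rat) ^- s) p
      (par (l * s - 1)).
  by move=> ndvd ndvd1; apply/cong0_mod_sum_dec_seqs/prime_par_dvd_mhs_numer.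
split => [_ ndvd ndvd1 | ls_small].
  rewrite mulnC in ndvd.
  by split; apply: mhs_cong => //; apply: ndvd1; rewrite leqnn andbT.
have small_ndvd m : (0 < m < p.-1)%N -> ~~ (p.-1 %| m)%N.
  by case/andP=> m_gt0 mp; apply/negP => /(dvdn_leq m_gt0); lia.
have ls_gt0 : (0 < l * s)%N by rewrite muln_gt0 l_gt0.
have ndvd : ~~ (p.-1 %| l * s)%N by apply: small_ndvd; lia.
have ndvd1 : ~~ (p.-1 %| l * s + 1)%N by apply: small_ndvd; lia.
split; try exact: mhs_cong.
by apply: cong0_mod_sum_dec_seqs; rewrite // expn1 prime_dvd_mhs_numer.
Qed.
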